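(* For every $\varepsilon>0$ there exists a constant $a_\varepsilon>0$, independent of $n$, such that for every dimension $n\ge1$, $$\frac{\operatorname{vol}\big(B_1^n+(a_\varepsilon/\sqrt{n})\,B_2^n\big)}{\operatorname{vol}\big((a_\varepsilon/\sqrt{n})\,B_2^n\big)}\le 2^{\varepsilon n}.$$
   Context: For $p\in[1,\infty]$, $B_p^n=\{x\in\mathbb{R}^n : \|x\|_p\le 1\}$ is the closed unit $\ell_p$-ball in $\mathbb{R}^n$; $\operatorname{vol}$ is $n$-dimensional Lebesgue measure and $A+C=\{a+c: a\in A, c\in C\}$ is the Minkowski sum. *)

From mathcomp Require Import all_boot all_order all_algebra.
From mathcomp Require Import all_classical all_reals all_analysis.
Set Implicit Arguments. Unset Strict Implicit. Unset Printing Implicit Defensive.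
Import Order.TTheory GRing.Theory Num.Theory.
Local Open Scope classical_set_scope.
Local Open Scope ring_scope.

Section Defs.
Variable R : realType.

Definition norm1 n (x : 'rV[R]_n) : R := \sum_(i < n) `|x ord0 i|.
Definition norm2 n (x : 'rV[R]_n) : R := Num.sqrt (\sum_(i < n) x ord0 i ^+ 2).

Definition l1ball n : set 'rV[R]_n := [set x | norm1 x <= 1].
Definition l2ball n : set 'rV[R]_n := [set x | norm2 x <= 1].

Definition minkowski_sum n (A C : set 'rV[R]_n) : set 'rV[R]_n :=
  [set z | exists a c, A a /\ C c /\ z = a + c].
Definition dilate n (t : R) (A : set 'rV[R]_n) : set 'rV[R]_n := [set t *: x | x in A].

Definition box n (a b : 'rV[R]_n) : set 'rV[R]_n :=
  [set x | forall i, a ord0 i <= x ord0 i <= b ord0 i].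
Definition boxvol n (a b : 'rV[R]_n) : R :=
  \prod_(i < n) Num.max 0 (b ord0 i - a ord0 i).

(* n-dimensional Lebesgue (outer) measure: infimum of total volumes of
   countable covers by boxes. *)
Definition lebvol n (A : set 'rV[R]_n) : \bar R :=
  ereal_inf [set s : \bar R | exists a b : nat -> 'rV[R]_n,
     A `<=` \bigcup_k box (a k) (b k) /\
     s = (\sum_(0 <= k <oo) (boxvol (a k) (b k))%:E)%E].
End Defs.

From mathcomp Require Import all_boot all_order all_algebra.
From mathcomp Require Import all_classical all_reals all_analysis.
From mathcomp Require Import lra ring zify.
Set Implicit Arguments. Unset Strict Implicit. Unset Printing Implicit Defensive.
Import Order.TTheory GRing.Theory Num.Theory.
Local Open Scope ring_scope.

(* Proof idea (a covering argument in the spirit of Maurey's empirical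
   approximation lemma).  Fix a grid size m.  Every x in the l_1 ball is
   within l_2 distance 1/sqrt m of an average (1/m) (v_1 + ... + v_m) of m
   letters v_k in {0, +-e_1, ..., +-e_n}; such averages only depend on the
   multiset of letters, so there are at most 'C(m + 2n, m) of them.  Hence
   B_1 + r B_2 is covered by 'C(m + 2n, m) translates of (1 + d) r B_2
   whenever 1/m <= (d r)^2, and the outer measure gives
     vol (B_1 + r B_2) <= 'C(m + 2n, m) (1 + d)^n vol (r B_2).
   With r = a / sqrt n, d = c and m = floor (n / kappa c) both factors are
   at most exp (c n), and c = eps ln 2 / 2 turns exp (2 c n) into 2^(eps n). *)

Section OuterMeasure.
Local Open Scope classical_set_scope.
Local Open Scope ereal_scope.
Variable R : realType.

Lemma boxvol_ge0 n (a b : 'rV[R]_n) : (0 <= boxvol a b)%R.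
Proof. by apply: prodr_ge0 => i _; rewrite le_max lexx. Qed.

Lemma lebvol_le_cover n (A : set 'rV[R]_n) (a b : nat -> 'rV[R]_n) :
  A `<=` \bigcup_k box (a k) (b k) ->
  lebvol A <= \sum_(0 <= k <oo) (boxvol (a k) (b k))%:E.
Proof. by move=> AB; apply: ereal_inf_lbound; exists a, b. Qed.

Lemma lebvol_ge0 n (A : set 'rV[R]_n) : 0 <= lebvol A.
Proof.
apply: le_ereal_inf_tmp => _ [a [b [_ ->]]].
by apply: nneseries_ge0 => k _ _; rewrite lee_fin boxvol_ge0.
Qed.

Lemma lebvol_le_subset n (A B : set 'rV[R]_n) : A `<=` B -> lebvol A <= lebvol B.
Proof.
move=> AB; apply: le_ereal_inf_tmp => _ [a [b [HB ->]]].
by apply: lebvol_le_cover => x /AB /HB.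
Qed.

Lemma boxvol_affine n (c a b : 'rV[R]_n) (t : R) : (0 <= t)%R ->
  boxvol (c + t *: a) (c + t *: b) = (t ^+ n * boxvol a b)%R.
Proof.
move=> t0; rewrite /boxvol.
rewrite (eq_bigr (fun i => t * Num.max 0 (b ord0 i - a ord0 i)))%R; last first.
  move=> i _; rewrite !mxE maxr_pMr // mulr0; congr Num.max.
  by rewrite mulrBr; lra.
by rewrite big_split /= prodr_const card_ord.
Qed.

Lemma lebvol_affine_le_cover n (A : set 'rV[R]_n) (c : 'rV[R]_n) (t : R)
    (a b : nat -> 'rV[R]_n) : (0 < t)%R ->
  A `<=` \bigcup_k box (a k) (b k) ->
  lebvol [set (c + t *: x)%R | x in A] <=
    (t ^+ n)%:E * \sum_(0 <= k <oo) (boxvol (a k) (b k))%:E.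
Proof.
move=> t0 HA.
rewrite -nneseriesZl; last by move=> k _; rewrite lee_fin boxvol_ge0.
under eq_eseriesr => k _ do rewrite -EFinM -(boxvol_affine c (a k) (b k) (ltW t0)).
apply: lebvol_le_cover => _ [x /HA [k _ Hk] <-]; exists k => // i.
rewrite !mxE; have /andP[h1 h2] := Hk i.
by rewrite !lerD2l !ler_pM2l // h1 h2.
Qed.

Lemma lebvol_affine n (A : set 'rV[R]_n) (c : 'rV[R]_n) (t : R) : (0 < t)%R ->
  lebvol [set (c + t *: x)%R | x in A] <= (t ^+ n)%:E * lebvol A.
Proof.
move=> t0; set B := [set _ | x in A].
have tn0 : (0 < t ^+ n)%R by rewrite exprn_gt0.
have -> : lebvol B = (t ^+ n)%:E * ((t ^+ n)^-1%:E * lebvol B).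
  by rewrite muleA -EFinM divff ?gt_eqF // mul1e.
apply: lee_wpmul2l; first by rewrite lee_fin ltW.
apply: le_ereal_inf_tmp => _ [a [b [HA ->]]].
have := lebvol_affine_le_cover c t0 HA.
move=> /(lee_wpmul2l (x := ((t ^+ n)^-1)%:E)); rewrite lee_fin invr_ge0 ltW //.
by move=> /(_ isT); rewrite muleA -EFinM mulVf ?gt_eqF // mul1e.
Qed.

Lemma eseries_interleave (f g : nat -> \bar R) :
  (forall k, 0 <= f k) -> (forall k, 0 <= g k) ->
  \sum_(0 <= k <oo) (if odd k then g k./2 else f k./2) =
  \sum_(0 <= k <oo) f k + \sum_(0 <= k <oo) g k.
Proof.
move=> f0 g0.
have h0 k : 0 <= (if odd k then g k./2 else f k./2) by case: ifP.
rewrite !nneseries_esumT // (esumID [set k | odd k]); last by move=> *; exact: h0.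
rewrite !setTI addeC; congr (_ + _).
  rewrite (reindex_esum [set: nat] _ (fun j => j.*2)).
    by apply: eq_esum => j _; rewrite odd_double doubleK.
  split.
  - by move=> j _; rewrite /setC /= odd_double.
  - by move=> i j _ _ /(congr1 half); rewrite !doubleK.
  - move=> k /negP ok; exists k./2 => //.
    by rewrite -[RHS](odd_double_half k) (negbTE ok).
rewrite (reindex_esum [set: nat] _ (fun j => j.*2.+1)).
  by apply: eq_esum => j _; rewrite /= odd_double /= uphalf_double.
split.
- by move=> j _; rewrite /= odd_double.
- by move=> i j _ _ [] /(congr1 half); rewrite !doubleK.
- move=> k /= ok; exists k./2 => //.
  by rewrite -[RHS](odd_double_half k) ok add1n.
Qed.

Lemma lebvol_infty_setU n (A B : set 'rV[R]_n) : ~~ (lebvol A \is a fin_num) ->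
  lebvol (A `|` B) <= lebvol A + lebvol B.
Proof.
move=> nfA; have -> : lebvol A = +oo.
  by move: nfA; rewrite ge0_fin_numE ?lebvol_ge0 // ltey negbK => /eqP.
by rewrite addye ?leey // gt_eqF // (lt_le_trans _ (lebvol_ge0 B)) ?ltNy0.
Qed.

(* Subadditivity: interleave two covers that are e/2-optimal. *)
Lemma lebvol_setU n (A B : set 'rV[R]_n) :
  lebvol (A `|` B) <= lebvol A + lebvol B.
Proof.
have [fA|] := boolP (lebvol A \is a fin_num); last exact: lebvol_infty_setU.
have [fB|nfB] := boolP (lebvol B \is a fin_num); last first.
  by rewrite setUC addeC; exact: lebvol_infty_setU.
apply/lee_addgt0Pr => e e0.
have e20 : (0 < e / 2)%R by rewrite divr_gt0.
have [_ [a1 [b1 [HA ->]]] lt1] := lb_ereal_inf_adherent e20 fA.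
have [_ [a2 [b2 [HB ->]]] lt2] := lb_ereal_inf_adherent e20 fB.
pose a k := if odd k then a2 k./2 else a1 k./2.
pose b k := if odd k then b2 k./2 else b1 k./2.
apply: (le_trans (lebvol_le_cover (a := a) (b := b) _)).
  move=> x [/HA [k _ Hk]|/HB [k _ Hk]].
    by exists k.*2 => //; rewrite /a /b odd_double doubleK.
  by exists k.*2.+1 => //; rewrite /a /b /= odd_double /= uphalf_double.
have E k : (boxvol (a k) (b k))%:E =
   (if odd k then (boxvol (a2 k./2) (b2 k./2))%:E
             else (boxvol (a1 k./2) (b1 k./2))%:E) by rewrite /a /b; case: ifP.
under eq_eseriesr => k _ do rewrite E.
rewrite (eseries_interleave (f := fun j => (boxvol (a1 j) (b1 j))%:E)
   (g := fun j => (boxvol (a2 j) (b2 j))%:E)); try by move=> k; rewrite lee_fin boxvol_ge0.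
have -> : lebvol A + lebvol B + e%:E =
          (lebvol A + (e / 2)%:E) + (lebvol B + (e / 2)%:E).
  rewrite -(fineK fA) -(fineK fB) -!EFinD; congr EFin; lra.
by apply: leeD; apply: ltW.
Qed.

Lemma lebvol_finite_cover n (T : eqType) (s : seq T) (A : T -> set 'rV[R]_n)
    (X : set 'rV[R]_n) (c : \bar R) :
  (0 < n)%N -> 0 <= c -> (forall i, i \in s -> lebvol (A i) <= c) ->
  X `<=` [set x | exists2 i, i \in s & A i x] ->
  lebvol X <= (size s)%:R%:E * c.
Proof.
move=> n0 c0; elim: s X => [|i s IH] X HA HX /=.
  rewrite mul0e.
  apply: (le_trans (lebvol_le_cover (a := fun _ => 0%R) (b := fun _ => 0%R) _)).
    by move=> x /HX [].
  rewrite eseries0 // => k _ _; congr EFin; rewrite /boxvol.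
  by rewrite (bigD1 (Ordinal n0)) //= subrr maxxx mul0r.
apply: (le_trans (lebvol_le_subset (B := A i `|` [set x | exists2 j, j \in s & A j x]) _)).
  move=> x /HX [j]; rewrite inE => /orP[/eqP -> ?|js ?]; first by left.
  by right; exists j.
apply: (le_trans (lebvol_setU _ _)).
rewrite -[(size s).+1]addn1 natrD EFinD ge0_muleDl ?lee_fin // mul1e addeC.
apply: leeD; last by apply: HA; rewrite inE eqxx.
by apply: IH => // j js; apply: HA; rewrite inE js orbT.
Qed.
End OuterMeasure.

Section Rounding.
Local Open Scope classical_set_scope.
Variable R : realType.

(* Squared l_2 error of rounding at grid size m: 1/m (1 for the empty grid). *)
Definition round_err (m : nat) : R := if m == 0%N then 1 else m%:R^-1.

Lemma round_err_ge0 m : 0 <= round_err m.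
Proof. by rewrite /round_err; case: ifP => // _; rewrite invr_ge0. Qed.

Definition sgn (x : R) : R := if 0 <= x then 1 else -1.

(* Rounding |x| down to the grid (1/m) N and restoring the sign of x costs at
   most |x| / m in square; this is where |x| <= 1 is used. *)
Lemma coord_round_err (m : nat) (x : R) : `|x| <= 1 ->
  (x - sgn x * ((Num.truncn (m%:R * `|x|))%:R / m%:R)) ^+ 2 <= round_err m * `|x|.
Proof.
move=> x1; rewrite /round_err.
have [->|m0] := eqVneq m 0%N.
  rewrite /= invr0 !mulr0 subr0 mul1r -(ger0_norm (sqr_ge0 x)) normrX expr2.
  by rewrite ler_piMl.
set k := Num.truncn _.
have mx0 : 0 <= m%:R * `|x| by rewrite mulr_ge0.
have /andP[k_le k_gt] := truncn_itv mx0; rewrite -/k in k_le k_gt.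
have mpos : 0 < m%:R :> R by rewrite ltr0n lt0n.
have err_ge0 : 0 <= `|x| - k%:R / m%:R.
  by rewrite subr_ge0 ler_pdivrMr // mulrC.
have err_le : `|x| - k%:R / m%:R <= m%:R^-1.
  have -> : `|x| - k%:R / m%:R = (m%:R * `|x| - k%:R) * m%:R^-1.
    by field; rewrite gt_eqF.
  rewrite -[X in _ <= X]mul1r; apply: ler_wpM2r; first by rewrite invr_ge0 ler0n.
  by move: k_gt; rewrite -natr1; lra.
have -> : (x - sgn x * (k%:R / m%:R)) ^+ 2 = (`|x| - k%:R / m%:R) ^+ 2.
  rewrite /sgn; case: ifPn => x0; first by rewrite mul1r ger0_norm.
  by rewrite ltr0_norm ?ltNge // -sqrrN; congr (_ ^+ 2); ring.
rewrite expr2; apply: (le_trans (ler_wpM2l err_ge0 err_le)).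
rewrite [X in _ <= X]mulrC; apply: ler_wpM2r; first by rewrite invr_ge0 ler0n.
by rewrite lerBlDr lerDl divr_ge0.
Qed.

(* The 2n+1 letters of the alphabet 'I_(2n+1): letter 0 is the zero vector,
   letter 1+j is e_j and letter n+1+j is -e_j. *)
Definition letter n (k : 'I_(n.*2).+1) : 'rV[R]_n :=
  \row_j (((k : nat) == j.+1)%:R - ((k : nat) == (n + j.+1)%N)%:R).

Definition sign_letter n (x : 'rV[R]_n) (i : 'I_n) : 'I_(n.*2).+1 :=
  if 0 <= x ord0 i then inord i.+1 else inord (n + i.+1).

Lemma letter0 n j : letter (ord0 : 'I_(n.*2).+1) ord0 j = 0.
Proof. by rewrite /letter mxE /= addnS subrr. Qed.

Lemma letter_sign n (x : 'rV[R]_n) i j :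
  letter (sign_letter x i) ord0 j = (i == j)%:R * sgn (x ord0 i).
Proof.
have ltin := ltn_ord i; have ltjn := ltn_ord j.
rewrite /sign_letter /sgn /letter mxE; case: ifP => _.
  rewrite inordK; last by rewrite -addnn; lia.
  rewrite eqSS (_ : (i.+1 == n + j.+1)%N = false) ?subr0 ?mulr1 //.
  by apply/negbTE/eqP; lia.
rewrite inordK; last by rewrite -addnn; lia.
rewrite eqn_add2l eqSS (_ : (n + i.+1 == j.+1)%N = false) ?sub0r ?mulrN1 //.
by apply/negbTE/eqP; lia.
Qed.

Definition grid_count n (m : nat) (x : 'rV[R]_n) (i : 'I_n) : nat :=
  Num.truncn (m%:R * `|x ord0 i|).

Definition round_word n m (x : 'rV[R]_n) : seq 'I_(n.*2).+1 :=
  flatten [seq nseq (grid_count m x i) (sign_letter x i) | i <- enum 'I_n] ++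
  nseq (m - \sum_i grid_count m x i) ord0.

Lemma sum_grid_count n m (x : 'rV[R]_n) :
  norm1 x <= 1 -> (\sum_i grid_count m x i <= m)%N.
Proof.
move=> x1; rewrite -(ler_nat R) natr_sum.
apply: (le_trans (y := \sum_i m%:R * `|x ord0 i|)).
  by apply: ler_sum => i _; rewrite /grid_count truncn_le mulr_ge0.
by rewrite -mulr_sumr -[X in _ <= X]mulr1; apply: ler_wpM2l.
Qed.

Lemma size_round_word n m (x : 'rV[R]_n) :
  norm1 x <= 1 -> size (round_word m x) = m.
Proof.
move=> x1; rewrite /round_word size_cat size_nseq size_flatten /shape -map_comp.
rewrite sumnE big_map big_enum /=.
rewrite (eq_bigr (grid_count m x)); last by move=> i _; rewrite size_nseq.
have -> : \sum_(i in 'I_n) grid_count m x i = \sum_(i < n) grid_count m x i.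
  exact: eq_bigl.
by rewrite subnKC ?sum_grid_count.
Qed.

Lemma sum_round_word n m (x : 'rV[R]_n) j :
  (\sum_(k <- round_word m x) letter k) ord0 j =
  (grid_count m x j)%:R * sgn (x ord0 j).
Proof.
rewrite summxE big_cat /= big_nseq letter0 iter_addr_0 mul0rn addr0.
rewrite big_flatten big_map big_enum /=.
under eq_bigr => i _ do rewrite big_nseq iter_addr_0 letter_sign.
rewrite (bigD1 j) //= eqxx big1 ?addr0; first by rewrite mul1r mulr_natl.
by move=> i /negbTE ->; rewrite mul0r mul0rn.
Qed.

Definition word_mean n m (s : seq 'I_(n.*2).+1) : 'rV[R]_n :=
  (m%:R)^-1 *: \sum_(k <- s) letter k.

Lemma round_word_mean n m (x : 'rV[R]_n) j :
  word_mean m (round_word m x) ord0 j =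
  sgn (x ord0 j) * ((grid_count m x j)%:R / m%:R).
Proof. by rewrite /word_mean mxE sum_round_word; ring. Qed.

Lemma norm1_coord n (x : 'rV[R]_n) j : `|x ord0 j| <= norm1 x.
Proof. by rewrite /norm1 (bigD1 j) //= lerDl sumr_ge0. Qed.

Lemma round_sq_err n m (x : 'rV[R]_n) : norm1 x <= 1 ->
  \sum_j (x ord0 j - word_mean m (round_word m x) ord0 j) ^+ 2 <= round_err m.
Proof.
move=> x1; under eq_bigr => j _ do rewrite round_word_mean.
apply: (le_trans (y := \sum_j round_err m * `|x ord0 j|)).
  by apply: ler_sum => j _; apply/coord_round_err/(le_trans (norm1_coord x j)).
by rewrite -mulr_sumr -[X in _ <= X]mulr1; apply: ler_wpM2l; rewrite ?round_err_ge0.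
Qed.

Lemma l2ballE n (u : 'rV[R]_n) : l2ball u <-> \sum_j u ord0 j ^+ 2 <= 1.
Proof.
rewrite /l2ball /norm2 /=; split => h; first by rewrite -(ler_sqrt _ ler01) sqrtr1.
by rewrite -sqrtr1 ler_sqrt.
Qed.

Lemma sqr_add_le (e v d : R) : 0 < d ->
  (e + v) ^+ 2 <= (1 + d^-1) * e ^+ 2 + (1 + d) * v ^+ 2.
Proof.
move=> d0; rewrite -subr_ge0.
have -> : (1 + d^-1) * e ^+ 2 + (1 + d) * v ^+ 2 - (e + v) ^+ 2 =
  (e - d * v) ^+ 2 / d by field; rewrite gt_eqF.
by rewrite divr_ge0 ?sqr_ge0 ?ltW.
Qed.

(* Triangle inequality for the euclidean norm, in the squared form needed:
   |e|_2 <= d r and |v|_2 <= r give |e + v|_2 <= (1 + d) r. *)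
Lemma sum_sqr_add_le n (e v : 'I_n -> R) (r d : R) : 0 < r -> 0 < d ->
  \sum_j e j ^+ 2 <= (d * r) ^+ 2 -> \sum_j v j ^+ 2 <= r ^+ 2 ->
  \sum_j (e j + v j) ^+ 2 <= ((1 + d) * r) ^+ 2.
Proof.
move=> r0 d0 he hv.
apply: (le_trans (y := (1 + d^-1) * \sum_j e j ^+ 2 + (1 + d) * \sum_j v j ^+ 2)).
  by rewrite !mulr_sumr -big_split /=; apply: ler_sum => j _; apply: sqr_add_le.
have -> : ((1 + d) * r) ^+ 2 = (1 + d^-1) * (d * r) ^+ 2 + (1 + d) * r ^+ 2.
  by field; rewrite gt_eqF.
by apply: lerD; apply: ler_wpM2l => //; rewrite addr_ge0 ?invr_ge0 ?ltW.
Qed.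

Lemma mem_shifted_ball n (p z : 'rV[R]_n) (s r : R) : 0 < s -> 0 < r ->
  \sum_j (z ord0 j - p ord0 j) ^+ 2 <= (s * r) ^+ 2 ->
  [set p + s *: y | y in dilate r (@l2ball R n)] z.
Proof.
move=> s0 r0 hz; have sr0 : 0 < s * r by rewrite mulr_gt0.
pose w := (s * r)^-1 *: (z - p).
exists (r *: w); last first.
  by rewrite /w !scalerA mulfV ?gt_eqF // scale1r addrC subrK.
exists w => //; apply/l2ballE.
under eq_bigr => j _ do rewrite !mxE exprMn.
by rewrite -mulr_sumr exprVn mulrC ler_pdivrMr ?exprn_gt0 // mul1r.
Qed.

(* Words up to rearrangement: sorted tuples of letters. *)
Definition sorted_words (n m : nat) : {set m.-tuple 'I_(n.*2).+1} :=
  [set t : m.-tuple 'I_(n.*2).+1 | sorted leq (map val t)]%SET.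

(* The mean of a word only depends on its multiset of letters. *)
Lemma sorted_word_mean n m (s : seq 'I_(n.*2).+1) : size s = m ->
  exists2 t, t \in enum (sorted_words n m) & word_mean m t = word_mean m s.
Proof.
pose le (a b : 'I_(n.*2).+1) := (a <= b)%N.
move=> size_s; have size_t : size (sort le s) == m by rewrite size_sort size_s.
exists (Tuple size_t).
  rewrite mem_enum inE /= sorted_map; apply: sort_sorted.
  by move=> a b; apply: leq_total.
by rewrite /word_mean /=; congr (_ *: _); apply: perm_big; rewrite perm_sort.
Qed.

Lemma minkowski_sum_cover n m (r d : R) : 0 < r -> 0 < d ->
  round_err m <= (d * r) ^+ 2 ->
  minkowski_sum (@l1ball R n) (dilate r (@l2ball R n)) `<=`
  [set z | exists2 t, t \in enum (sorted_words n m) &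
     [set word_mean m t + (1 + d) *: y | y in dilate r (@l2ball R n)] z].
Proof.
move=> r0 d0 hm z [x [_ [x1 [[u /l2ballE u1 <-] ->]]]].
have [t t_sorted mean_t] := sorted_word_mean (size_round_word m x1).
exists t => //; rewrite mean_t; apply: mem_shifted_ball; rewrite ?addr_gt0 //.
under eq_bigr => j _ do rewrite [(x + _) _ _]mxE [(r *: u) _ _]mxE addrAC.
apply: sum_sqr_add_le => //; first exact: le_trans (round_sq_err m x1) hm.
under eq_bigr => j _ do rewrite exprMn.
by rewrite -mulr_sumr -[X in _ <= X]mulr1 ler_wpM2l ?sqr_ge0.
Qed.
End Rounding.
Arguments round_err {R}.
Arguments word_mean {R n}.

Section Covering.
Local Open Scope classical_set_scope.
Local Open Scope ereal_scope.
Variable R : realType.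

(* Volume form of the covering: when the rounding error at grid size m is
   at most (d r)^2, vol (B_1 + r B_2) <= 'C(m + 2n, m) (1 + d)^n vol (r B_2);
   'C(m + 2n, m) counts the sorted words of length m on 2n + 1 letters. *)
Lemma minkowski_sum_vol_le n m (r d : R) : (0 < n)%N -> (0 < r)%R -> (0 < d)%R ->
  (round_err m <= (d * r) ^+ 2)%R ->
  lebvol (minkowski_sum (@l1ball R n) (dilate r (@l2ball R n))) <=
  ('C(m + n.*2, m)%:R * (1 + d) ^+ n)%:E * lebvol (dilate r (@l2ball R n)).
Proof.
move=> n0 r0 d0 hm; set D := dilate r _.
have d1 : (0 < 1 + d)%R by rewrite addr_gt0.
have cD0 : 0 <= ((1 + d) ^+ n)%:E * lebvol D.
  by rewrite mule_ge0 ?lebvol_ge0 // lee_fin exprn_ge0 // ltW.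
apply: (le_trans (lebvol_finite_cover
  (A := fun t : m.-tuple 'I_(n.*2).+1 => [set (word_mean m t + (1 + d) *: y)%R | y in D])
  n0 cD0 _ (minkowski_sum_cover r0 d0 hm))).
  by move=> t _; apply: lebvol_affine.
by rewrite -cardE card_sorted_tuples muleA -EFinM.
Qed.
End Covering.

Section Counting.
Variable R : realType.

Lemma ffact_le_expn N m : (N ^_ m <= N ^ m)%N.
Proof.
elim: m N => [|m IH] N //; rewrite ffactnS expnS leq_mul //.
apply: (leq_trans (IH _)); case: m {IH} => // m.
by rewrite leq_exp2r // leq_pred.
Qed.

(* 'C(N, m) <= N^m / m! <= (N / m)^m e^m, using m^m / m! <= e^m. *)
Lemma bin_le_expR (N m : nat) : (0 < m)%N ->
  'C(N, m)%:R <= (N%:R / m%:R) ^+ m * expR m%:R :> R.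
Proof.
move=> m0.
have fact0 : (m`!)%:R != 0 :> R by rewrite pnatr_eq0 -lt0n fact_gt0.
have mR0 : m%:R != 0 :> R by rewrite pnatr_eq0 -lt0n.
have -> : 'C(N, m)%:R = (N ^_ m)%:R / (m`!)%:R :> R.
  by rewrite -bin_ffact natrM mulfK.
apply: (le_trans (y := (N ^ m)%:R / (m`!)%:R)).
  by apply: ler_wpM2r; [rewrite invr_ge0 ler0n | rewrite ler_nat ffact_le_expn].
have mm_fact : m%:R ^+ m / (m`!)%:R <= expR m%:R :> R.
  case: m m0 {fact0 mR0} => // m' _.
  have := expR_ge1Dxn (R := R) (x := m'.+1%:R) m' (ler0n _ _); lra.
have -> : (N ^ m)%:R / (m`!)%:R = (N%:R / m%:R) ^+ m * (m%:R ^+ m / (m`!)%:R) :> R.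
  by rewrite natrX exprMn exprVn; field; rewrite fact0 expf_neq0.
by apply: ler_wpM2l => //; apply/exprn_ge0/divr_ge0.
Qed.

Lemma expR_ge_powD (c : R) n : 0 <= c -> (1 + c) ^+ n <= expR (c * n%:R).
Proof.
move=> c0; rewrite mulrC expRM_natl.
by apply: lerXn2r; rewrite ?nnegrE ?expR_ge1Dx ?addr_ge0 // ltW ?expR_gt0.
Qed.

(* The grid size is n / kappa c rounded down, where kappa c = (2 + 16/c)/c
   is chosen so that there are at most exp (c n) sorted words. *)
Definition kappa (c : R) : R := (2 + 16 / c) / c.

Definition grid_size (c : R) (n : nat) : nat := Num.truncn (n%:R / kappa c).

Lemma kappa_gt0 c : 0 < c -> 0 < kappa c.
Proof. by move=> c0; rewrite divr_gt0 // addr_gt0 // divr_gt0. Qed.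

Lemma kappa_expR c : 0 < c -> (1 + 4 * kappa c) * expR 1 <= expR (c * kappa c).
Proof.
move=> c0; set q := 16 / c.
have q0 : 0 < q by rewrite divr_gt0.
have cq : c * q = 16 by rewrite /q; field; rewrite gt_eqF.
have -> : c * kappa c = 1 + (1 + q) by rewrite /kappa -/q; field; rewrite gt_eqF.
rewrite expRD mulrC; apply: ler_wpM2l; first exact: ltW (expR_gt0 _).
have := @expR_ge1Dxn R (1 + q) 1%N (addr_ge0 ler01 (ltW q0)).
have -> : kappa c = (2 + q) * q / 16 by rewrite /kappa -/q -cq; field; rewrite !gt_eqF.
rewrite (_ : (2`!)%:R = 2 :> R) //; nra.
Qed.

Lemma grid_size_bounds c n : 0 < c ->
  (grid_size c n)%:R * kappa c <= n%:R < ((grid_size c n)%:R + 1) * kappa c.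
Proof.
move=> c0; have K0 := kappa_gt0 c0.
have nK0 : 0 <= n%:R / kappa c by rewrite divr_ge0 // ltW.
have /andP[lo hi] := truncn_itv nK0.
by rewrite -ler_pdivlMr // -ltr_pdivrMr // natr1 lo.
Qed.

Lemma count_sorted_words c n : 0 < c ->
  'C(grid_size c n + n.*2, grid_size c n)%:R <= expR (c * n%:R).
Proof.
move=> c0; have K0 := kappa_gt0 c0.
have /andP[Km nK] := grid_size_bounds n c0.
set m := grid_size c n in Km nK *; set K := kappa c in K0 Km nK *.
have [->|m0] := eqVneq m 0%N.
  by rewrite bin0; apply: le_trans (expR_ge1Dx _); rewrite lerDl mulr_ge0 // ltW.
have m_gt0 : (0 < m)%N by rewrite lt0n.
have m1 : 1 <= m%:R :> R by rewrite ler1n.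
apply: (le_trans (bin_le_expR (m + n.*2) m_gt0)).
have ratio : (m + n.*2)%:R / m%:R <= 1 + 4 * K :> R.
  by rewrite ler_pdivrMr ?(lt_le_trans ltr01) // natrD -muln2 natrM; nra.
apply: (le_trans (y := ((1 + 4 * K) * expR 1) ^+ m)).
  rewrite [X in _ <= X]exprMn -expRM_natl mulr1; apply: ler_wpM2r; first exact: ltW (expR_gt0 _).
  by apply: lerXn2r; rewrite ?nnegrE ?divr_ge0 //; lra.
apply: (le_trans (y := expR (c * K) ^+ m)).
  apply: lerXn2r; rewrite ?nnegrE ?kappa_expR ?ltW ?expR_gt0 //.
  by rewrite mulr_gt0 ?expR_gt0 //; lra.
by rewrite -expRM_natl ler_expR; nra.
Qed.

Lemma round_err_grid_size c n : 0 < c -> (0 < n)%N ->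
  round_err (grid_size c n) <= 2 * kappa c / n%:R.
Proof.
move=> c0 n0; have K0 := kappa_gt0 c0.
have /andP[_ nK] := grid_size_bounds n c0.
have nR : 0 < n%:R :> R by rewrite ltr0n.
rewrite /round_err; case: eqP => [m0|/eqP m0].
  by rewrite m0 add0r mul1r in nK; rewrite ler_pdivlMr // mul1r; lra.
have m1 : 1 <= (grid_size c n)%:R :> R by rewrite ler1n lt0n.
rewrite -subr_ge0.
have -> : 2 * kappa c / n%:R - (grid_size c n)%:R^-1 =
    (2 * kappa c * (grid_size c n)%:R - n%:R) / (n%:R * (grid_size c n)%:R).
  by field; rewrite !gt_eqF // (lt_le_trans ltr01).
by rewrite divr_ge0 ?mulr_ge0 ?ltW //; nra.
Qed.
End Counting.

Theorem lemma3 (R : realType) (eps : R) (heps : 0 < eps) :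
  exists a : R, 0 < a /\
    forall n : nat, (1 <= n)%N ->
      (lebvol (minkowski_sum (@l1ball R n) (dilate (a / Num.sqrt n%:R) (@l2ball R n)))
       <= (2 `^ (eps * n%:R))%:E * lebvol (dilate (a / Num.sqrt n%:R) (@l2ball R n)))%E.
Proof.
(* Both the counting factor and (1 + c)^n cost exp (c n), c = eps ln 2 / 2. *)
set c := eps * ln 2 / 2.
have c0 : 0 < c by rewrite divr_gt0 // mulr_gt0 // ln_gt0 // ltr1n.
have K0 := kappa_gt0 c0.
have a0 : 0 < Num.sqrt (2 * kappa c) / c by rewrite divr_gt0 // sqrtr_gt0 mulr_gt0.
exists (Num.sqrt (2 * kappa c) / c); split => // n n_gt0.
set r := _ / Num.sqrt n%:R.
have sqrt_n0 : 0 < Num.sqrt n%:R :> R by rewrite sqrtr_gt0 ltr0n.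
have r0 : 0 < r by rewrite divr_gt0.
(* The radius is tuned so that (c r)^2 = 2 kappa / n bounds the rounding error. *)
have cr2 : (c * r) ^+ 2 = 2 * kappa c / n%:R.
  rewrite /r mulrA mulrCA mulfV ?gt_eqF // mulr1 expr_div_n.
  by rewrite !sqr_sqrtr ?ler0n // mulr_ge0 // ltW.
have err_le : round_err (grid_size c n) <= (c * r) ^+ 2.
  by rewrite cr2; exact: round_err_grid_size.
apply: (le_trans (minkowski_sum_vol_le n_gt0 r0 c0 err_le)).
apply: lee_wpmul2r; first exact: lebvol_ge0.
rewrite lee_fin (le_trans (ler_pM _ _ (count_sorted_words n c0)
                                     (expR_ge_powD n (ltW c0)))) //.
- by rewrite exprn_ge0 // addr_ge0 // ltW.
- rewrite -expRD (_ : c * n%:R + c * n%:R = eps * n%:R * ln 2); last first.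
    by rewrite /c; field.
  by rewrite /powR (negbTE (_ : (2 : R) != 0)).
Qed.
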